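(* Let $p(z)=\sum_{j=0}^d a_j z^j$ be a complex polynomial of degree $d \geq 2$ and let $B$ be a closed convex subset of $\mathbb{C}$ containing all zeros of $p'$. Then the set $C_B$ of all $w \in \mathbb{C}$ such that all zeros of the polynomial $z \mapsto p(z)-w$ lie in $B$ is a convex set.
   Context: Convexity is with respect to the real vector space structure $\mathbb{C}\cong\mathbb{R}^2$. *)

From HB Require Import structures.
From mathcomp Require Import all_boot all_order all_algebra.
From mathcomp Require Import complex.
From mathcomp Require Import all_classical all_reals all_analysis.
Set Implicit Arguments. Unset Strict Implicit. Unset Printing Implicit Defensive.
Import Order.TTheory GRing.Theory Num.Theory.
Import numFieldNormedType.Exports.
Local Open Scope ring_scope.
Local Open Scope classical_set_scope.
Local Open Scope complex_scope.

Definition cconvex (R : realType) (A : set R[i]) : Prop :=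
  forall (a b : R[i]) (t : R), A a -> A b -> 0 <= t <= 1 ->
    A ((1 - t)%:C * a + t%:C * b).

Definition CB (R : realType) (p : {poly R[i]}) (B : set R[i]) : set R[i] :=
  [set w | forall z : R[i], root (p - w%:P) z -> B z].

(* Closedness in C ~ R^2 with the Euclidean (modulus) topology:
   every point outside A has a ball around it disjoint from A.
   (`|z - w| is the complex modulus, a real number embedded in R[i].) *)
Definition cclosed (R : realType) (A : set R[i]) : Prop :=
  forall w : R[i], ~ A w ->
    exists e : R, 0 < e /\ forall z : R[i], `|z - w| < e%:C -> ~ A z.

From HB Require Import structures.
From mathcomp Require Import all_boot all_order all_algebra.
From mathcomp Require Import complex.
From mathcomp Require Import ring lra.
From mathcomp Require Import all_classical all_reals all_analysis.
Set Implicit Arguments. Unset Strict Implicit. Unset Printing Implicit Defensive.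
Import Order.TTheory GRing.Theory Num.Theory.
Import numFieldNormedType.Exports.
Import Normc.
Local Open Scope ring_scope.
Local Open Scope classical_set_scope.
Local Open Scope complex_scope.

(* Let w0, w1 be in C_B, w_s = (1 - s) w0 + s w1, and suppose some root z of
   p - w_t (0 <= t <= 1) lies outside B.
   1. Separation: a direction v strictly separates z from the finitely many
      points of B given by the roots of p - w0, p - w1 and p' ([separate]).
   2. Extremal root: since roots depend continuously on the constant term
      ([root_near_small_value]), the largest value of <v, x> over roots x of
      p - w_s, s in [0,1], is attained at some root zs of p - w_tm
      ([extremal_root]); then <v, zs> >= <v, z>, so 0 < tm < 1.
   3. Local escape: after the change of variable x = zs + v h, the critical
      points lie in Re h < 0, and a second-order analysis of the inverse
      branch of the polynomial near its simple root 0 ([perturbed_root],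
      [root_escapes]) moves a root into Re h > 0 for some small real change
      of tm ([root_push]), contradicting the maximality of zs. *)

Section Modulus.
Variable R : realType.
Local Notation C := R[i].
Implicit Types x y z : C.

(* [normc z] is the modulus of [z] as a real number; unlike the complex
   norm [`|z|], it lives in an ordered field where [lra]/[nra] apply. *)
Lemma normcE z : `|z| = (normc z)%:C.
Proof. by case: z => a b; rewrite normc_def. Qed.

Lemma normc_ge0 z : 0 <= normc z.
Proof. by case: z => a b; exact: sqrtr_ge0. Qed.

Lemma normc_gt0 z : z != 0 -> 0 < normc z.
Proof.
by move=> z0; rewrite lt_def normc_ge0 andbT; apply: contra z0 => /eqP/eq0_normc ->.
Qed.

Lemma normcB x y : normc (x - y) = normc (y - x).
Proof. by rewrite -normcN opprB. Qed.

Lemma normcX x n : normc (x ^+ n) = normc x ^+ n.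
Proof. by elim: n => [|n IH]; rewrite ?normc1 // !exprS normcM IH. Qed.

Lemma normcR (r : R) : normc r%:C = `|r|.
Proof. by rewrite /normc /= expr0n /= addr0 sqrtr_sqr. Qed.

Lemma Re_le_normc z : complex.Re z <= normc z.
Proof.
case: z => a b /=; apply: le_trans (ler_norm a) _; rewrite -sqrtr_sqr.
by apply: ler_wsqrtr; rewrite lerDl sqr_ge0.
Qed.

Lemma normcJ z : normc z^* = normc z.
Proof. by case: z => a b; rewrite /normc /= sqrrN. Qed.

Lemma normc_sqr z : normc z ^+ 2 = complex.Re z ^+ 2 + complex.Im z ^+ 2.
Proof. by case: z => a b; rewrite /normc sqr_sqrtr // addr_ge0 ?sqr_ge0. Qed.

Lemma normc_sum (I : Type) (s : seq I) (F : I -> C) :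
  normc (\sum_(i <- s) F i) <= \sum_(i <- s) normc (F i).
Proof.
elim: s => [|a s IH]; first by rewrite !big_nil normc0.
by rewrite !big_cons; apply: le_trans (le_normcD _ _) _; exact: lerD.
Qed.

Lemma normc_prod (I : Type) (s : seq I) (F : I -> C) :
  normc (\prod_(i <- s) F i) = \prod_(i <- s) normc (F i).
Proof.
elim: s => [|a s IH]; first by rewrite !big_nil normc1.
by rewrite !big_cons normcM IH.
Qed.

(* The Euclidean inner product of C ~ R^2; a real-linear functional
   [dotc v] is how half-planes and "directions" enter the argument. *)
Definition dotc (u w : C) : R :=
  complex.Re u * complex.Re w + complex.Im u * complex.Im w.

Lemma dotcB (v x y : C) : dotc v (x - y) = dotc v x - dotc v y.
Proof. by case: v x y => ? ? [? ?] [? ?]; rewrite /dotc /=; ring. Qed.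

Lemma dotc_le (v w : C) : dotc v w <= normc v * normc w.
Proof.
have -> : dotc v w = complex.Re (v^* * w) by case: v w => ? ? [? ?]; rewrite /dotc /=; ring.
by apply: le_trans (Re_le_normc _) _; rewrite normcM normcJ.
Qed.

Lemma dotc_shift (v x r : C) :
  dotc v (x + v * r) = dotc v x + normc v ^+ 2 * complex.Re r.
Proof. by rewrite normc_sqr; case: v x r => ? ? [? ?] [? ?]; rewrite /dotc /=; ring. Qed.

End Modulus.

Section RootLocation.
Variable R : realType.
Local Notation C := R[i].

Definition rootseq (P : {poly C}) : seq C := sval (closed_field_poly_normal P).

Lemma rootseqE (P : {poly C}) :
  P = lead_coef P *: \prod_(z <- rootseq P) ('X - z%:P).
Proof. exact: svalP (closed_field_poly_normal P). Qed.

Lemma mem_rootseq (P : {poly C}) x : P != 0 -> (x \in rootseq P) = root P x.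
Proof. by move=> P0; rewrite [in RHS](rootseqE P) rootZ ?lead_coef_eq0 // root_prod_XsubC. Qed.

Lemma size_rootseq (P : {poly C}) : P != 0 -> size (rootseq P) = (size P).-1.
Proof.
move=> P0; rewrite [in RHS](rootseqE P) size_scale ?lead_coef_eq0 //.
by rewrite size_prod_XsubC.
Qed.

Lemma horner_deriv_prod_XsubC (rs : seq C) x : x \notin rs ->
  (\prod_(z <- rs) ('X - z%:P))^`().[x] =
  (\prod_(z <- rs) ('X - z%:P)).[x] * \sum_(z <- rs) (x - z)^-1.
Proof.
elim: rs => [|a s IH]; first by rewrite !big_nil mulr0 -polyC1 derivC horner0.
rewrite in_cons negb_or => /andP[xa xs].
rewrite !big_cons derivM derivXsubC mul1r hornerD !hornerM hornerXsubC IH //.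
have xa0 : x - a != 0 by rewrite subr_eq0.
set P := (\prod_(_ <- s) _).[x]; set S := \sum_(_ <- s) _.
by rewrite [RHS]mulrDr mulrAC divff // mul1r; ring.
Qed.

(* If every root of [P] is farther than [r] from [x], then
   [|P(x)| >= |lc P| r^deg P]: a polynomial is not small far from its roots. *)
Lemma root_near_small_value (P : {poly C}) x (r : R) : 0 <= r ->
  normc P.[x] < r ^+ (size P).-1 * normc (lead_coef P) ->
  exists2 z, root P z & normc (x - z) <= r.
Proof.
move=> r0 small; have P0 : P != 0.
  by apply: contraTneq small => ->; rewrite lead_coef0 horner0 normc0 mulr0 ltxx.
case: (boolP (has (fun z => normc (x - z) <= r) (rootseq P))) => [/hasP[z zin near]|/hasPn far].
  by exists z; rewrite // -mem_rootseq.
exfalso; move: small; apply/negP; rewrite -leNgt [in P.[x]](rootseqE P) hornerZ normcM [X in _ <= X]mulrC -(size_rootseq P0).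
apply: ler_wpM2r; first exact: normc_ge0.
rewrite horner_prod normc_prod; elim: (rootseq P) far => [|b s IH] far.
  by rewrite big_nil expr0.
rewrite big_cons /= exprS hornerXsubC; apply: ler_pM => //; first exact: exprn_ge0.
- by apply: ltW; rewrite ltNge; apply: far; exact: mem_head.
- by apply: IH => z zs; apply: far; rewrite in_cons zs orbT.
Qed.

Lemma root_near_newton (P : {poly C}) x (r : R) : 0 < r ->
  ((size P).-1)%:R * normc P.[x] < normc P^`().[x] * r ->
  exists2 z, root P z & normc (x - z) <= r.
Proof.
move=> r0 small; have P0 : P != 0.
  by apply: contraTneq small => ->; rewrite deriv0 !horner0 normc0 mul0r mulr0 ltxx.
case: (boolP (has (fun z => normc (x - z) <= r) (rootseq P))) => [/hasP[z zin near]|/hasPn far].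
  by exists z; rewrite // -mem_rootseq.
have {}far z : z \in rootseq P -> r < normc (x - z) by move/far; rewrite ltNge.
have xrs : x \notin rootseq P by apply/negP => /far; rewrite subrr normc0 ltNge ltW.
exfalso; move: small; apply/negP; rewrite -leNgt -(size_rootseq P0) [in deriv P](rootseqE P) [in P.[x]](rootseqE P) derivZ !hornerZ.
rewrite horner_deriv_prod_XsubC // mulrA normcM -mulrA [_ * normc (_ * _)]mulrC.
apply: ler_wpM2l; first exact: normc_ge0.
apply: le_trans (ler_wpM2r (ltW r0) (normc_sum _ (fun z => (x - z)^-1))) _.
elim: (rootseq P) far xrs => [|b s IH] far xrs; first by rewrite big_nil mul0r.
rewrite big_cons mulrDl /= -add1n natrD; apply: lerD; last first.
  apply: IH => [z zs|]; first by apply: far; rewrite in_cons zs orbT.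
  by move: xrs; rewrite in_cons negb_or => /andP[].
have hb := far b (mem_head _ _).
by rewrite normcV ler_pdivrMl ?mulr1 ?ltW //; exact: lt_trans hb.
Qed.

Lemma size_subC (P : {poly C}) (k : C) : (1 < size P)%N -> size (P - k%:P) = size P.
Proof.
move=> hP; rewrite size_polyDl // size_polyN; apply: leq_ltn_trans hP.
exact: size_polyC_leq1.
Qed.

Lemma subC_neq0 (P : {poly C}) (k : C) : (1 < size P)%N -> P - k%:P != 0.
Proof. by move=> sP; rewrite -size_poly_gt0 size_subC // (ltn_trans _ sP). Qed.

Lemma lead_coef_subC (P : {poly C}) (k : C) :
  (1 < size P)%N -> lead_coef (P - k%:P) = lead_coef P.
Proof.
move=> sP; rewrite lead_coefDl // size_polyN.
exact: leq_ltn_trans (size_polyC_leq1 _) sP.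
Qed.

Lemma size_deriv_gt1 (P : {poly C}) : (2 < size P)%N -> (1 < size (deriv P))%N.
Proof.
move=> hP; rewrite ltnNge; apply/negP => /leq_sizeP small.
have lc : P`_(size P).-1 != 0.
  by rewrite -lead_coefE lead_coef_eq0 -size_poly_gt0; case: (size P) hP.
move: hP lc small; case: (size P) => [|[|[|m]]] // _ lc /(_ m.+1 isT) /eqP.
by rewrite coef_deriv mulrn_eq0 /= (negPf lc).
Qed.

End RootLocation.

Section Taylor.
Variable R : realType.
Local Notation C := R[i].

Definition coefnorm (P : {poly C}) : R := \sum_(i < size P) normc P`_i.

Lemma coefnorm_ge0 P : 0 <= coefnorm P.
Proof. by apply: sumr_ge0 => i _; exact: normc_ge0. Qed.

Lemma horner_le_coefnorm (P : {poly C}) h : normc h <= 1 -> normc P.[h] <= coefnorm P.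
Proof.
move=> h1; rewrite horner_coef; apply: le_trans (normc_sum _ _) _.
apply: ler_sum => i _; rewrite normcM normcX; apply: ler_piMr; first exact: normc_ge0.
by apply: exprn_ile1 => //; exact: normc_ge0.
Qed.

Lemma taylor_remainder (P : {poly C}) (k : nat) h : normc h <= 1 ->
  normc (P.[h] - \sum_(i < k) P`_i * h ^+ i) <= coefnorm (drop_poly k P) * normc h ^+ k.
Proof.
move=> h1; rewrite -{1}(poly_take_drop k P) hornerD hornerM hornerXn.
rewrite /take_poly horner_poly addrC addKr normcM normcX.
by apply: ler_wpM2r; [exact: exprn_ge0 _ (normc_ge0 _) | exact: horner_le_coefnorm].
Qed.

End Taylor.

Section Perturbation.
Variable R : realType.
Local Notation C := R[i].

(* [u |-> u - beta u^2] inverts [h |-> h + beta h^2] up to order 3. *)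
Definition quad_inverse (beta u : C) : C := u - beta * u ^+ 2.

Lemma normc_quad_inverse (beta u : C) : normc u <= 1 ->
  normc (quad_inverse beta u) <= (1 + normc beta) * normc u.
Proof.
move=> u1; apply: le_trans (le_normcD _ _) _; rewrite normcN normcM normcX.
have u0 := normc_ge0 u; have b0 := normc_ge0 beta.
by rewrite expr2 mulrDl mul1r lerD2l mulrA ler_piMr // mulr_ge0.
Qed.

Section Defect.
Variables (Q : {poly C}) (beta : C).
Hypotheses (Q0 : Q`_0 = 0) (Q2 : Q`_2 = Q`_1 * beta).

Definition defect_const : R :=
  normc Q`_1 * normc beta ^+ 2 * (2 + normc beta) +
  coefnorm (drop_poly 3 Q) * (1 + normc beta) ^+ 3.

Lemma defect_const_ge0 : 0 <= defect_const.
Proof.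
have b0 := normc_ge0 beta.
apply: addr_ge0; apply: mulr_ge0; rewrite ?exprn_ge0 ?coefnorm_ge0 //; try lra.
by rewrite mulr_ge0 ?normc_ge0 ?exprn_ge0.
Qed.

(* Since [Q h = Q_1 (h + beta h^2) + O(h^3)], the point [quad_inverse beta u]
   is mapped by [Q] to [Q_1 u] up to an error of order [|u|^3]. *)
Lemma quad_inverse_defect (u : C) :
  normc u <= 1 -> normc (quad_inverse beta u) <= 1 ->
  normc (Q.[quad_inverse beta u] - Q`_1 * u) <= defect_const * normc u ^+ 3.
Proof.
move=> u1 h1; set h := quad_inverse beta u.
have rem := taylor_remainder Q 3 h1.
rewrite !big_ord_recr big_ord0 /= expr0 mulr1 expr1 Q0 Q2 add0r add0r in rem.
have -> : Q.[h] - Q`_1 * u =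
    (Q.[h] - (Q`_1 * h + Q`_1 * beta * h ^+ 2)) - Q`_1 * beta ^+ 2 * u ^+ 3 * (2%:R - beta * u).
  by rewrite /h /quad_inverse; ring.
apply: le_trans (le_normcD _ _) _; rewrite normcN /defect_const mulrDl [X in _ <= X]addrC.
apply: lerD.
  apply: le_trans rem _; rewrite -mulrA; apply: ler_wpM2l; first exact: coefnorm_ge0.
  rewrite -exprMn; apply: lerXn2r; rewrite ?nnegrE ?normc_ge0 //.
    by rewrite mulr_ge0 ?normc_ge0 // addr_ge0 ?normc_ge0.
  exact: normc_quad_inverse.
rewrite normcM normcM normcM normcX normcX.
set c := normc Q`_1 * _; set u3 := normc u ^+ 3.
have c0 : 0 <= c by rewrite mulr_ge0 ?exprn_ge0 ?normc_ge0.
rewrite -mulrA -[c * _ * u3]mulrA [_ * u3]mulrC; apply: ler_wpM2l => //.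
apply: ler_wpM2l; first exact: exprn_ge0 _ (normc_ge0 _).
apply: le_trans (le_normcD _ _) _; rewrite normcN normcM normcMn normc1.
by rewrite lerD2l ler_piMr ?normc_ge0.
Qed.

End Defect.

Lemma deriv_lower_bound (Q : {poly C}) (h : C) : normc h <= 1 ->
  coefnorm (drop_poly 1 Q^`()) * normc h <= normc Q`_1 / 2 ->
  normc Q`_1 / 2 <= normc Q^`().[h].
Proof.
move=> h1 small; have rem := taylor_remainder Q^`() 1 h1.
rewrite big_ord1 expr0 mulr1 expr1 coef_deriv mulr1n in rem.
have tri := le_normcD Q^`().[h] (Q`_1 - Q^`().[h]).
rewrite addrC subrK normcB in tri; lra.
Qed.

Lemma approx_root (Q : {poly C}) (y h : C) (a d : R) :
  (1 < size Q)%N -> 0 < a -> 0 < d ->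
  a <= normc Q^`().[h] -> normc (Q.[h] - y) <= d ->
  exists2 rho, Q.[rho] = y & normc (h - rho) <= 2 * ((size Q).-1)%:R * d / a.
Proof.
move=> sQ a0 d0 aQ' defect; set m := (size Q).-1.
have m1 : 1 <= m%:R :> R by rewrite ler1n /m; case: (size Q) sQ => [|[|]].
set P := Q - y%:P.
have [rho /rootP rootrho near] : exists2 rho, root P rho & normc (h - rho) <= 2 * m%:R * d / a.
  apply: root_near_newton; first by rewrite !mulr_gt0 ?invr_gt0 //; lra.
  rewrite size_subC // /P derivB derivC subr0 hornerD hornerN hornerC -/m.
  apply: lt_le_trans (ler_wpM2r _ aQ'); last by rewrite !mulr_ge0 ?invr_ge0 //; lra.
  rewrite mulrCA divff ?lt0r_neq0 // mulr1.
  by apply: le_lt_trans (ler_wpM2l (ler0n _ _) defect) _; nra.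
exists rho => //.
by apply/eqP; rewrite -subr_eq0; move: rootrho; rewrite /P hornerD hornerN hornerC => ->.
Qed.

Lemma perturbed_root (Q : {poly C}) (beta : C) :
  Q`_0 = 0 -> Q`_1 != 0 -> Q`_2 = Q`_1 * beta -> (1 < size Q)%N ->
  exists e0 k3 : R, [/\ 0 < e0, 0 <= k3 & forall u, normc u <= e0 ->
   exists rho, Q.[rho] = Q`_1 * u /\
     normc (quad_inverse beta u - rho) <= k3 * normc u ^+ 3].
Proof.
move=> Q0 a0 Q2 sQ.
set A := normc Q`_1; set Bt := normc beta; set K := defect_const Q beta.
set K1 := coefnorm (drop_poly 1 Q^`()); set m := (size Q).-1.
have A0 : 0 < A := normc_gt0 a0.
have B0 : 0 <= Bt := normc_ge0 beta.
have K0 : 0 <= K := defect_const_ge0 Q beta.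
have K10 : 0 <= K1 := coefnorm_ge0 _.
exists (Num.min (1 / (1 + Bt)) (A / (2 * (K1 * (1 + Bt) + 1)))), (4 * m%:R * (K + 1) / A).
split.
- by rewrite lt_min !divr_gt0 //; nra.
- by rewrite divr_ge0 ?mulr_ge0 //; lra.
move=> u; rewrite le_min !ler_pdivlMr; [|nra|lra] => /andP[uB uK].
have [->|u0] := eqVneq u 0.
  exists 0; split; first by rewrite horner_coef0 Q0 mulr0.
  have -> : quad_inverse beta 0 - 0 = 0 by rewrite /quad_inverse; ring.
  by rewrite normc0 exprS mul0r mulr0.
have u3 : 0 < normc u ^+ 3 := exprn_gt0 _ (normc_gt0 u0).
have u1 : normc u <= 1 by nra.
have hB : normc (quad_inverse beta u) <= (1 + Bt) * normc u := normc_quad_inverse beta u1.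
have h1 : normc (quad_inverse beta u) <= 1 by lra.
have defect := quad_inverse_defect Q0 Q2 u1 h1; rewrite -/K in defect.
have dQ : A / 2 <= normc Q^`().[quad_inverse beta u].
  apply: deriv_lower_bound => //; rewrite -/K1 -/A.
  move: uK; have := ler_wpM2l K10 hB; rewrite mulrA; set X := K1 * (1 + Bt).
  have := normc_ge0 u; nra.
have A2 : 0 < A / 2 by rewrite divr_gt0.
have Ku : 0 < (K + 1) * normc u ^+ 3 by rewrite mulr_gt0 //; lra.
have defect' : normc (Q.[quad_inverse beta u] - Q`_1 * u) <= (K + 1) * normc u ^+ 3.
  by apply: le_trans defect _; rewrite ler_wpM2r ?ltW //; lra.
have [rho Qrho near] := approx_root sQ A2 Ku dQ defect'.
exists rho; split => //; apply: le_trans near _; rewrite -/m le_eqVlt; apply/orP; left.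
by apply/eqP; field; exact: lt0r_neq0.
Qed.

End Perturbation.

Section Escape.
Variable R : realType.
Local Notation C := R[i].

Lemma Re_inv_opp (z : C) : complex.Re z < 0 -> 0 < complex.Re ((- z)^-1).
Proof. by case: z => x y /= hx; apply: divr_gt0; nra. Qed.

Lemma Re_sum_inv_opp_gt0 (cs : seq C) : cs != [::] ->
  (forall c, c \in cs -> complex.Re c < 0) ->
  0 < complex.Re (\sum_(c <- cs) (- c)^-1).
Proof.
elim: cs => // c s IH _ neg; rewrite big_cons.
set t := (- c)^-1; set S := \sum_(_ <- _) _.
have Rt : 0 < complex.Re t by apply: Re_inv_opp; apply: neg; exact: mem_head.
have RS : 0 <= complex.Re S.
  case: s IH neg {t Rt} @S => [|w s] IH neg; first by rewrite big_nil.
  by apply: ltW; apply: IH => // z zs; apply: neg; rewrite in_cons zs orbT.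
by move: Rt RS; case: t => ? ?; case: S => ? ? /=; lra.
Qed.

(* If all critical points of [Q] lie in the open left half-plane and
   [Q(0) = 0], then 0 is a simple root and the quadratic coefficient is
   [Q_1 beta] with [Re beta > 0]: indeed [2 beta = Q''(0)/Q'(0)] is the sum
   of the [1/(0 - c)] over the critical points [c]. *)
Lemma critical_coefs (Q : {poly C}) :
  Q`_0 = 0 -> (2 < size Q)%N ->
  (forall c, root (deriv Q) c -> complex.Re c < 0) ->
  Q`_1 != 0 /\ exists2 beta, Q`_2 = Q`_1 * beta & 0 < complex.Re beta.
Proof.
move=> Q0 sQ crit.
have Q'0 : (deriv Q).[0] = Q`_1 by rewrite horner_coef0 coef_deriv mulr1n.
have a0 : Q`_1 != 0 by rewrite -Q'0; apply/negP => /eqP/rootP/crit; rewrite ltxx.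
split => //.
have sQ' := size_deriv_gt1 sQ.
have Q'n0 : deriv Q != 0 by rewrite -size_poly_gt0 (ltn_trans _ sQ').
set cs := rootseq (deriv Q).
have csneg c : c \in cs -> complex.Re c < 0 by rewrite mem_rootseq // => /crit.
have n0 : 0 \notin cs by apply/negP => /csneg; rewrite ltxx.
set S := \sum_(c <- cs) (- c)^-1.
have Q''0 : Q`_2 *+ 2 = Q`_1 * S.
  have -> : Q`_2 *+ 2 = (deriv (deriv Q)).[0] by rewrite horner_coef0 !coef_deriv mulr1n.
  rewrite -Q'0 [in deriv (deriv Q)](rootseqE (deriv Q)) [in (deriv Q).[0]](rootseqE (deriv Q)).
  rewrite derivZ !hornerZ horner_deriv_prod_XsubC // -mulrA.
  by congr (_ * (_ * _)); apply: eq_bigr => c _; rewrite sub0r.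
have half : (2%:R : C) * (1 / 2)%:C = 1.
  by rewrite -(rmorph_nat (real_complex R)) -rmorphM /= mul1r divff ?pnatr_eq0.
exists (S * (1 / 2)%:C).
  by rewrite mulrA -Q''0 -[Q`_2 *+ 2]mulr_natr -mulrA half mulr1.
have : 0 < complex.Re S.
  apply: Re_sum_inv_opp_gt0 => //.
  by rewrite -size_eq0 size_rootseq //; case: (size _) sQ' => [|[|]].
by clear Q''0; case: S => a b /=; rewrite !mulr0 subr0; lra.
Qed.

Lemma Re_quad_inverse (beta kap : C) (eps : R) :
  complex.Re (quad_inverse beta (eps%:C * kap)) =
  eps * complex.Re kap - eps ^+ 2 * complex.Re (beta * kap ^+ 2).
Proof. by case: beta kap => ? ? [? ?]; rewrite /quad_inverse !expr2 /=; ring. Qed.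

(* For purely imaginary [kap != 0], [beta kap^2 = - |kap|^2 beta]. *)
Lemma Re_mul_sqr_imaginary (beta kap : C) : complex.Re kap = 0 -> kap != 0 ->
  0 < complex.Re beta -> complex.Re (beta * kap ^+ 2) < 0.
Proof.
case: kap => x y /= -> k0 Rb; have y0 : y != 0 by apply: contraNneq k0 => ->.
have y2 : 0 < y ^+ 2 by rewrite exprn_even_gt0.
by move: Rb y2; case: beta => a b /= Rb y2; rewrite !expr2 /= in y2 *; nra.
Qed.

(* The real germ [eps |-> eps x - eps^2 g] beats [k |eps|^3] at some
   arbitrarily small [eps], unless it vanishes to second order:
   use the linear term when [x != 0], the quadratic one when [g < 0]. *)
Lemma real_escape (x g k e : R) : x != 0 \/ g < 0 -> 0 <= k -> 0 < e ->
  exists eps, [/\ 0 < `|eps|, `|eps| <= e & k * `|eps| ^+ 3 < eps * x - eps ^+ 2 * g].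
Proof.
move=> xg k0 e0; have [x0|x0] := eqVneq x 0.
  have g0 : g < 0 by case: xg => //; rewrite x0 eqxx.
  set eta := Num.min e (- g / (k + 1)).
  have eta0 : 0 < eta by rewrite lt_min e0 divr_gt0 //; lra.
  have etag : eta * (k + 1) <= - g by rewrite -ler_pdivlMr ?ge_min ?lexx ?orbT //; lra.
  exists eta; rewrite gtr0_norm // ge_min lexx; split => //.
  rewrite x0 mulr0 sub0r -mulrN (_ : k * eta ^+ 3 = eta ^+ 2 * (k * eta)); last by ring.
  by rewrite ltr_pM2l ?exprn_gt0 //; lra.
set eta := Num.min (Num.min e 1) (`|x| / (`|g| + k + 1)).
have gk : 0 < `|g| + k + 1 by have := normr_ge0 g; lra.
have eta0 : 0 < eta by rewrite !lt_min e0 ltr01 divr_gt0 ?normr_gt0.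
have etae : eta <= e by rewrite !ge_min lexx.
have eta1 : eta <= 1 by rewrite !ge_min lexx orbT.
have etax : eta * (`|g| + k + 1) <= `|x| by rewrite -ler_pdivlMr // !ge_min lexx orbT.
exists (if 0 <= x then eta else - eta).
have -> : `|if 0 <= x then eta else - eta| = eta by case: ifP; rewrite ?normrN gtr0_norm.
have -> : (if 0 <= x then eta else - eta) * x = eta * `|x|.
  case: ifP => x_ge0; first by rewrite ger0_norm.
  by rewrite ltr0_norm ?mulNr ?mulrN // ltNge x_ge0.
have -> : (if 0 <= x then eta else - eta) ^+ 2 = eta ^+ 2 by case: ifP; rewrite ?sqrrN.
split => //.
have e2 : 0 < eta ^+ 2 := exprn_gt0 2 eta0.
have h1 := ler_wpM2l (ltW eta0) etax.
have h2 : k * eta ^+ 3 <= k * eta ^+ 2.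
  by apply: ler_wpM2l => //; rewrite exprS; have := ler_wpM2r (ltW e2) eta1; lra.
have h3 : eta ^+ 2 * g <= eta ^+ 2 * `|g| := ler_wpM2l (ltW e2) (ler_norm g).
lra.
Qed.

Lemma root_escapes (Q : {poly C}) (c : C) (delta : R) :
  Q`_0 = 0 -> (2 < size Q)%N ->
  (forall r, root (deriv Q) r -> complex.Re r < 0) -> c != 0 -> 0 < delta ->
  exists eps rho, [/\ `|eps| < delta, Q.[rho] = eps%:C * c & 0 < complex.Re rho].
Proof.
move=> Q0 sQ crit c0 d0.
have [a0 [beta Q2 Rbeta]] := critical_coefs Q0 sQ crit.
have [e0 [k3 [e00 k30 perturb]]] := perturbed_root Q0 a0 Q2 (ltn_trans (isT : 1 < 2)%N sQ).
set kap := c / Q`_1.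
have k0 : kap != 0 by rewrite mulf_neq0 ?invr_eq0.
have nk0 : 0 < normc kap := normc_gt0 k0.
have xg : complex.Re kap != 0 \/ complex.Re (beta * kap ^+ 2) < 0.
  have [Rk|Rk] := eqVneq (complex.Re kap) 0; last by left.
  by right; exact: Re_mul_sqr_imaginary.
have e0' : 0 < Num.min (delta / 2) (e0 / normc kap) by rewrite lt_min !divr_gt0.
have [eps [eps0 epse esc]] := real_escape xg (mulr_ge0 k30 (exprn_ge0 3 (ltW nk0))) e0'.
move: epse; rewrite le_min => /andP[epsd]; rewrite ler_pdivlMr // => epsk.
set u := eps%:C * kap.
have nu : normc u = `|eps| * normc kap by rewrite normcM normcR.
have nue : normc u <= e0 by rewrite nu.
have [rho [Qrho near]] := perturb u nue.
exists eps, rho; split; first lra.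
  by rewrite Qrho /u /kap mulrCA [Q`_1 * _]mulrC divfK.
have Rdiff : complex.Re (quad_inverse beta u) - complex.Re rho <=
    normc (quad_inverse beta u - rho).
  by move: (Re_le_normc (quad_inverse beta u - rho)) => /=; case: (quad_inverse _ _) => ? ?; case: (rho) => ? ?.
rewrite Re_quad_inverse in Rdiff; rewrite nu exprMn mulrA in near.
rewrite mulrAC in esc; lra.
Qed.

End Escape.

Section Separation.
Variable R : realType.
Local Notation C := R[i].

Lemma dotc_self (v : C) : dotc v v = normc v ^+ 2.
Proof. by rewrite normc_sqr /dotc !expr2. Qed.

Lemma normc_sqrD_le (x y : C) :
  normc (x + y) ^+ 2 <= 2 * normc x ^+ 2 + 2 * normc y ^+ 2.
Proof.
rewrite !normc_sqr; case: x y => a b [c d] /=.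
by have := sqr_ge0 (a - c); have := sqr_ge0 (b - d); nra.
Qed.

(* Variational inequality at an almost-nearest point: if [b0] is within
   [eta] of minimising [|z - b|^2] over the convex set [B], then the segment
   from [b0] towards any [f] in [B] cannot go much closer to [z]. *)
Lemma almost_nearest (B : set C) (z b0 f : C) (D eta s : R) :
  cconvex B -> B b0 -> B f -> (forall b, B b -> D <= normc (z - b) ^+ 2) ->
  normc (z - b0) ^+ 2 <= D + eta -> 0 <= s <= 1 ->
  2 * s * dotc (z - b0) (f - b0) <= eta + s ^+ 2 * normc (f - b0) ^+ 2.
Proof.
move=> Bcv Bb0 Bf Dlb b0near s01.
have := Dlb _ (Bcv _ _ _ Bb0 Bf s01); move: b0near; clear Bb0 Bf Dlb.
rewrite !normc_sqr /dotc.
by case: z b0 f => [z1 z2] [b1 b2] [f1 f2] /=; lra.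
Qed.

Lemma cclosed_far (B : set C) (z : C) : cclosed B -> ~ B z ->
  exists2 e : R, 0 < e & forall b, B b -> e ^+ 2 <= normc (z - b) ^+ 2.
Proof.
move=> Bcl nBz; have [e [e0 ball]] := Bcl z nBz; exists e => // b Bb.
have ez : e <= normc (z - b).
  by rewrite leNgt; apply/negP => near; apply: (ball b) => //; rewrite normcE ltcR normcB.
by have := normc_ge0 (z - b); nra.
Qed.

Lemma sqdist_inf (B : set C) (z : C) : B !=set0 ->
  exists D : R, [/\ 0 <= D, forall b, B b -> D <= normc (z - b) ^+ 2 &
    forall eta, 0 < eta -> exists2 b0, B b0 & normc (z - b0) ^+ 2 < D + eta].
Proof.
move=> [b1 Bb1]; set S := [set normc (z - b) ^+ 2 | b in B].
have Sn : S !=set0 by exists (normc (z - b1) ^+ 2), b1.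
have Slb : has_lbound S by exists 0 => _ [b Bb <-]; rewrite exprn_ge0 ?normc_ge0.
exists (inf S); split.
- by apply: lb_le_inf => // _ [b Bb <-]; rewrite exprn_ge0 ?normc_ge0.
- by move=> b Bb; apply: ge_inf => //; exists b.
move=> eta eta0; have [_ [b0 Bb0 <-] near] := inf_lt Sn (ltr_pwDr eta0 (lexx (inf S))).
by exists b0.
Qed.

(* A point outside a closed convex set [B] is strictly separated, by a
   linear functional [dotc v], from any finite nonempty subset [F] of [B]:
   take [v = z - b0] for an almost-nearest point [b0] of [B], with an
   accuracy depending on how far the points of [F] are. *)
Lemma separate (B : set C) (F : seq C) (z : C) :
  cclosed B -> cconvex B -> (forall f, f \in F -> B f) -> F != [::] -> ~ B z ->
  exists v : C, forall f, f \in F -> dotc v f < dotc v z.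
Proof.
move=> Bcl Bcv FB Fn nBz.
have [e e0 far] := cclosed_far Bcl nBz.
have [D [D0 DS Dinf]] : exists D : R, [/\ 0 <= D, forall b, B b -> D <= normc (z - b) ^+ 2 &
    forall eta, 0 < eta -> exists2 b0, B b0 & normc (z - b0) ^+ 2 < D + eta].
  by apply: sqdist_inf; case: F Fn FB => // f s _ FB; exists f; apply: FB; exact: mem_head.
set G := 2 * \sum_(f <- F) normc (f - z) ^+ 2 + 2 * (D + 1).
have e2 : 0 < e ^+ 2 := exprn_gt0 2 e0.
have G0 : 0 <= G.
  by rewrite /G addr_ge0 ?mulr_ge0 ?sumr_ge0 // => [f _|]; rewrite ?exprn_ge0 ?normc_ge0 //; lra.
set s := e ^+ 2 / (G + e ^+ 2).
have s0 : 0 < s by rewrite divr_gt0 //; lra.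
have s1 : 0 <= s <= 1 by rewrite ltW //= ler_pdivrMr; lra.
have sG : s * (G + e ^+ 2) = e ^+ 2 by rewrite /s divfK //; lra.
set eta := Num.min 1 (s * e ^+ 2).
have [eta1 etas] : eta <= 1 /\ eta <= s * e ^+ 2 by rewrite !ge_min !lexx orbT.
have eta0 : 0 < eta by rewrite lt_min ltr01 mulr_gt0.
have [b0 Bb0 b0near] := Dinf eta eta0.
exists (z - b0) => f fF; rewrite ltNge; apply/negP => obtuse.
have ineq := almost_nearest Bcv Bb0 (FB f fF) DS (ltW b0near) s1.
have dot_ge : e ^+ 2 <= dotc (z - b0) (f - b0).
  have := far b0 Bb0; have := dotcB (z - b0) f b0; have := dotcB (z - b0) z b0.
  by rewrite dotc_self; lra.
have fb0 : normc (f - b0) ^+ 2 <= G.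
  have sumF : normc (f - z) ^+ 2 <= \sum_(f <- F) normc (f - z) ^+ 2.
    by rewrite (big_rem f) //= lerDl sumr_ge0 // => w _; rewrite exprn_ge0 ?normc_ge0.
  by have := normc_sqrD_le (f - z) (z - b0); rewrite addrA subrK /G; lra.
(* [almost_nearest] now gives [2 s e^2 <= eta + s^2 G <= s e^2 + s^2 G],
   i.e. [e^2 <= s G], whereas [s G = e^2 - s e^2 < e^2]. *)
have h1 := ler_wpM2l (ltW s0) dot_ge.
have h2 := ler_wpM2l (ltW (exprn_gt0 2 s0)) fb0.
have h3 : s * (s * (G + e ^+ 2)) = s * e ^+ 2 by rewrite sG.
have h4 : 0 < s * (s * e ^+ 2) by do 2 apply: mulr_gt0 => //.
nra.
Qed.

Lemma separating_direction (p : {poly C}) (B : set C) (w0 w1 z : C) :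
  (2 < size p)%N -> cclosed B -> cconvex B ->
  (forall x, root (deriv p) x -> B x) ->
  (forall x, root (p - w0%:P) x -> B x) -> (forall x, root (p - w1%:P) x -> B x) ->
  ~ B z ->
  exists v, [/\ v != 0, forall x, root (p - w0%:P) x -> dotc v x < dotc v z,
    forall x, root (p - w1%:P) x -> dotc v x < dotc v z &
    forall x, root (deriv p) x -> dotc v x < dotc v z].
Proof.
move=> sp Bcl Bcv Bcrit B0 B1 nBz.
have sp1 : (1 < size p)%N := ltn_trans (isT : (1 < 2)%N) sp.
have p'0 : deriv p != 0 by rewrite -size_poly_gt0 (ltn_trans _ (size_deriv_gt1 sp)).
have [pw0 pw1] := (subC_neq0 w0 sp1, subC_neq0 w1 sp1).
set F := rootseq (p - w0%:P) ++ rootseq (p - w1%:P) ++ rootseq (deriv p).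
have memF x : (x \in F) = [|| root (p - w0%:P) x, root (p - w1%:P) x | root (deriv p) x].
  by rewrite !mem_cat !mem_rootseq.
have FB f : f \in F -> B f by rewrite memF => /or3P[/B0|/B1|/Bcrit].
have Fn : F != [::].
  rewrite /F -size_eq0 !size_cat addn_eq0 size_rootseq // size_subC //.
  by case: (size p) sp => [|[|[|n]]].
have [v sep] := separate Bcl Bcv FB Fn nBz.
exists v; split => [|x xr|x xr|x xr]; last 3 first.
- by apply: sep; rewrite memF xr.
- by apply: sep; rewrite memF xr orbT.
- by apply: sep; rewrite memF xr !orbT.
have [f fF] : exists f, f \in F by case: (F) Fn => // f s _; exists f; exact: mem_head.
by apply: contraTneq (sep f fF) => ->; rewrite /dotc /= !mul0r addr0 ltxx.
Qed.

End Separation.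

Section MaxRoot.
Variable R : realType.
Local Notation C := R[i].

(* The maximum of [f] over a nonempty list (the head value otherwise). *)
Definition seqmax (f : C -> R) (s : seq C) : R :=
  foldr (fun x m => Num.max (f x) m) (f (head 0 s)) s.

Lemma seqmax_ub (f : C -> R) (s : seq C) x : x \in s -> f x <= seqmax f s.
Proof.
rewrite /seqmax; move: (f (head 0 s)) => m; elim: s m => // a s IH m.
by rewrite in_cons le_max => /orP[/eqP->|/IH->]; rewrite ?lexx ?orbT.
Qed.

Lemma seqmax_mem (f : C -> R) (s : seq C) :
  s != [::] -> exists2 x, x \in s & seqmax f s = f x.
Proof.
case: s => // a s _.
have aux s' : exists2 x, x \in a :: s' & foldr (fun x m => Num.max (f x) m) (f a) s' = f x.
  elim: s' => [|b s' [x xin IH]] /=; first by exists a; rewrite ?mem_head.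
  rewrite IH; case: (leP (f b) (f x)) => _; last by exists b; rewrite ?in_cons ?eqxx ?orbT.
  by exists x => //; move: xin; rewrite !in_cons => /orP[->|->]; rewrite ?orbT.
have [x xin Hx] := aux (a :: s); exists x; last by rewrite /seqmax.
by move: xin; rewrite in_cons => /orP[/eqP->|//]; exact: mem_head.
Qed.

Definition maxdot (v : C) (P : {poly C}) : R := seqmax (dotc v) (rootseq P).

Lemma maxdot_ub (v : C) (P : {poly C}) x : P != 0 -> root P x -> dotc v x <= maxdot v P.
Proof. by move=> P0; rewrite -mem_rootseq //; exact: seqmax_ub. Qed.

Lemma maxdot_mem (v : C) (P : {poly C}) :
  (1 < size P)%N -> exists2 x, root P x & maxdot v P = dotc v x.
Proof.
move=> sP; have P0 : P != 0 by rewrite -size_poly_gt0 (ltn_trans _ sP).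
rewrite /maxdot; have [|x xin ->] := @seqmax_mem (dotc v) (rootseq P); last by exists x; rewrite -?mem_rootseq.
by rewrite -size_eq0 size_rootseq //; case: (size P) sP => [|[|]].
Qed.

Lemma maxdot_shift (P : {poly C}) (v k k' : C) (r : R) : (1 < size P)%N -> 0 < r ->
  normc (k - k') < r ^+ (size P).-1 * normc (lead_coef P) ->
  maxdot v (P - k%:P) <= maxdot v (P - k'%:P) + normc v * r.
Proof.
move=> sP r0 small.
have sPk : (1 < size (P - k%:P)%R)%N by rewrite size_subC.
have [x xroot ->] := maxdot_mem v sPk.
have Px : (P - k'%:P).[x] = k - k'.
  move/rootP: xroot; rewrite !hornerD !hornerN !hornerC => /eqP.
  by rewrite subr_eq0 => /eqP ->.
have [|y yroot near] := @root_near_small_value _ (P - k'%:P) x r (ltW r0).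
  by rewrite Px size_subC // lead_coef_subC.
have := maxdot_ub v (subC_neq0 k' sP) yroot.
have := dotc_le v (x - y); rewrite dotcB.
have := ler_wpM2l (normc_ge0 v) near; lra.
Qed.

Lemma maxdot_continuous (P : {poly C}) (v : C) (g : R -> C) (L : R) :
  (1 < size P)%N -> (forall s u, normc (g s - g u) <= L * `|s - u|) ->
  continuous (fun s => maxdot v (P - (g s)%:P)).
Proof.
move=> sP lip s; apply/cvgrPdist_lt => eps eps0.
set r := eps / (normc v + 1).
have nv0 := normc_ge0 v.
have r0 : 0 < r by rewrite divr_gt0 //; lra.
have vr : normc v * r < eps by rewrite /r mulrA ltr_pdivrMr; nra.
have lc0 : 0 < normc (lead_coef P).
  by apply: normc_gt0; rewrite lead_coef_eq0 -size_poly_gt0 (ltn_trans _ sP).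
set m := r ^+ (size P).-1 * normc (lead_coef P).
have m0 : 0 < m by rewrite mulr_gt0 ?exprn_gt0.
have L0 : 0 <= L.
  by have := lip 0 1; rewrite sub0r normrN normr1 mulr1; have := normc_ge0 (g 0 - g 1); lra.
near=> u.
have su : `|s - u| * (L + 1) < m.
  near: u; apply/nbhs_ballP; exists (m / (L + 1)); first by rewrite /= divr_gt0 //; lra.
  by move=> u; rewrite /ball_ /= ltr_pdivlMr //; lra.
have gsu s' u' : `|s' - u'| = `|s - u| -> normc (g s' - g u') < m.
  move=> d; apply: le_lt_trans (lip s' u') _; rewrite d.
  by have := normr_ge0 (s - u); nra.
have h1 := maxdot_shift v sP r0 (gsu s u erefl).
have h2 := maxdot_shift v sP r0 (gsu u s (distrC _ _)).
by apply/ltr_normlP; split; lra.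
Unshelve. all: by end_near.
Qed.

End MaxRoot.

Section Segment.
Variable R : realType.
Local Notation C := R[i].

Definition segment (w0 w1 : C) (s : R) : C := (1 - s)%:C * w0 + s%:C * w1.

Lemma segment0 (w0 w1 : C) : segment w0 w1 0 = w0.
Proof. by case: w0 w1 => ? ? [? ?]; rewrite /segment /=; congr (_ +i* _); ring. Qed.

Lemma segment1 (w0 w1 : C) : segment w0 w1 1 = w1.
Proof. by case: w0 w1 => ? ? [? ?]; rewrite /segment /=; congr (_ +i* _); ring. Qed.

Lemma segmentB (w0 w1 : C) (s u : R) :
  segment w0 w1 s - segment w0 w1 u = (s - u)%:C * (w1 - w0).
Proof. by case: w0 w1 => ? ? [? ?]; rewrite /segment /=; congr (_ +i* _); ring. Qed.

Lemma segmentD (w0 w1 : C) (s e : R) :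
  segment w0 w1 (s + e) = segment w0 w1 s + e%:C * (w1 - w0).
Proof. by case: w0 w1 => ? ? [? ?]; rewrite /segment /=; congr (_ +i* _); ring. Qed.

Lemma segment_const (w : C) (s : R) : segment w w s = w.
Proof. by case: w => ? ?; rewrite /segment /=; congr (_ +i* _); ring. Qed.

(* Along the segment there is a parameter [tm] and a root [zs] of [p - w_tm]
   maximising [dotc v] over all roots of all [p - w_s], [s] in [0,1]:
   the largest root projection is continuous in [s] (extreme value theorem). *)
Lemma extremal_root (p : {poly C}) (v w0 w1 : C) : (1 < size p)%N ->
  exists tm zs, [/\ 0 <= tm <= 1, root (p - (segment w0 w1 tm)%:P) zs &
    forall s x, 0 <= s <= 1 -> root (p - (segment w0 w1 s)%:P) x -> dotc v x <= dotc v zs].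
Proof.
move=> sp; set M := fun s => maxdot v (p - (segment w0 w1 s)%:P).
have Mcont : continuous M.
  apply: (@maxdot_continuous _ p v _ (normc (w1 - w0))) => // s u.
  by rewrite segmentB normcM normcR mulrC.
have [tm tm01 tmmax] := @EVT_max R M 0 1 ler01 (continuous_subspaceT Mcont).
move: tm01; rewrite in_itv /= => tm01.
have sptm : (1 < size (p - (segment w0 w1 tm)%:P)%R)%N by rewrite size_subC.
have [zs zsroot Mzs] := maxdot_mem v sptm.
exists tm, zs; split => // s x s01 xroot.
rewrite -Mzs; apply: le_trans (tmmax s _); last by rewrite in_itv.
exact: maxdot_ub (subC_neq0 _ sp) xroot.
Qed.

(* Rescale around a root [zs] of [p - w] in the direction [v]: if all
   critical points of [p] project strictly below [zs], a small real move of
   the constant term along any [c] produces a root projecting above [zs]. *)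
Lemma root_push (p : {poly C}) (w c zs v : C) (delta : R) :
  (2 < size p)%N -> v != 0 -> root (p - w%:P) zs ->
  (forall x, root (deriv p) x -> dotc v x < dotc v zs) -> c != 0 -> 0 < delta ->
  exists eps x, [/\ `|eps| < delta, root (p - (w + eps%:C * c)%:P) x &
    dotc v zs < dotc v x].
Proof.
move=> sp v0 zsroot crit c0 d0.
set q := v *: 'X + zs%:P.
have qh h : q.[h] = zs + v * h by rewrite /q hornerD hornerZ hornerX hornerC addrC.
set Q := p \Po q - w%:P.
have Qh h : Q.[h] = p.[zs + v * h] - w by rewrite /Q hornerD hornerN hornerC horner_comp qh.
have Q0 : Q`_0 = 0.
  by move/rootP: zsroot; rewrite -horner_coef0 Qh mulr0 addr0 !hornerE.
have sq : size q = 2.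
  have sX : size (v *: 'X : {poly C}) = 2 by rewrite size_scale ?size_polyX.
  by rewrite /q size_polyDl sX // (leq_ltn_trans (size_polyC_leq1 _)).
have sQ : (2 < size Q)%N by rewrite /Q size_subC size_comp_poly2 // (ltn_trans _ sp).
have v2 : 0 < normc v ^+ 2 := exprn_gt0 2 (normc_gt0 v0).
have critQ r : root (deriv Q) r -> complex.Re r < 0.
  have dq : deriv q = v%:P by rewrite /q derivD derivC addr0 derivZ derivX alg_polyC.
  rewrite /Q derivB derivC subr0 deriv_comp dq /root hornerM hornerC horner_comp qh.
  rewrite mulf_eq0 (negPf v0) orbF.
  move=> /crit; rewrite dotc_shift; nra.
have [eps [rho [epsd Qrho Rrho]]] := root_escapes Q0 sQ critQ c0 d0.
exists eps, (zs + v * rho); split => //.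
  by apply/rootP; rewrite !hornerE -Qrho Qh; ring.
by rewrite dotc_shift ltrDl mulr_gt0.
Qed.

End Segment.

Unset Implicit Arguments.

Theorem mainTheorem2 (R : realType) (p : {poly R[i]}) (B : set R[i]) :
  (2 <= (size p).-1)%N ->
  cclosed B -> cconvex B ->
  (forall z : R[i], root p^`() z -> B z) ->
  cconvex (CB p B).
Proof.
move=> hd Bcl Bcv Bcrit w0 w1 t Cw0 Cw1 t01 z hz.
have [//|nBz] := pselect (B z); exfalso.
have sp : (2 < size p)%N by case: (size p) hd => [|[|[|]]].
have [v [v0 sep0 sep1 sepc]] := separating_direction sp Bcl Bcv Bcrit Cw0 Cw1 nBz.
have [tm [zs [tm01 zsroot zsmax]]] := extremal_root v w0 w1 (ltn_trans (isT : (1 < 2)%N) sp).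
have zbelow : dotc v z <= dotc v zs := zsmax t z t01 hz.
(* The extremal root is not a root of [p - w0] nor of [p - w1]. *)
have tm_gt0 : 0 < tm.
  rewrite lt_def (andP tm01).1 andbT; apply/eqP => tmE.
  by move: zsroot; rewrite tmE segment0 => /sep0; lra.
have tm_lt1 : tm < 1.
  rewrite lt_def (andP tm01).2 andbT; apply/eqP => tmE.
  by move: zsroot; rewrite -tmE segment1 => /sep1; lra.
have w10 : w1 - w0 != 0.
  apply/eqP => /subr0_eq w10; have hz' : root (p - (segment w0 w1 t)%:P) z := hz.
  by move: hz'; rewrite w10 segment_const => /sep0; rewrite ltxx.
(* Pushing the constant term slightly along the segment beats [zs]. *)
have crit x : root (deriv p) x -> dotc v x < dotc v zs by move/sepc; lra.
have d0 : 0 < Num.min tm (1 - tm) by rewrite lt_min tm_gt0 subr_gt0.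
have [eps [x [epsd xroot xbig]]] := root_push sp v0 zsroot crit w10 d0.
rewrite -segmentD in xroot.
have s01 : 0 <= tm + eps <= 1.
  by move: epsd; rewrite lt_min !ltr_norml => /andP[/andP[? ?] /andP[? ?]]; apply/andP; split; lra.
by have := zsmax _ _ s01 xroot; lra.
Qed.
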